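(* The following formulae provide biholomorphisms between the corresponding domains: \begin{itemize} \item $\mathbb L_2\ni w\mapsto (2iw_2,-w_1-w_2^2)\in \mathbb G_2$, \item $\mathbb L_3\ni w\mapsto (w_2+iw_3,-w_2+iw_3,-w_3^2-w_2^2-w_1)\in\mathbb E$, \item $\mathbb L_4\ni w\mapsto (w_3+iw_4,-w_3+iw_4,-w_2^2-w_3^2-w_4^2-w_1,2w_2)\in\mathbb F$. \end{itemize}
   Context: $L_n=\{z\in\mathbb B_n: \sqrt{(\sum_{j=1}^n|z_j|^2)^2-|\sum_{j=1}^nz_j^2|^2}<1-\sum_{j=1}^n|z_j|^2\}$ is the Lie ball and $\mathbb L_n:=\Lambda_n(L_n)$ with $\Lambda_n(z)=(z_1^2,z_2,\ldots,z_n)$. The symmetrized bidisc is $\mathbb G_2=\{(\lambda_1+\lambda_2,\lambda_1\lambda_2):\lambda_1,\lambda_2\in\mathbb D\}$. The tetrablock is $\mathbb E=\{(a_{11},a_{22},a_{11}a_{22}-a^2): \begin{pmatrix} a_{11} & a\\ a & a_{22}\end{pmatrix}\in\mathcal R_{III}(2)\}$, where $\mathcal R_{III}(2)$ is the set of symmetric $2\times 2$ complex matrices of operator norm $<1$. The domain $\mathbb F=\{(a_{11},a_{22},a_{11}a_{22}-a_{12}a_{21},a_{12}+a_{21}): \begin{pmatrix} a_{11} & a_{12}\\ a_{21} & a_{22}\end{pmatrix}\in\mathcal R_{I}(2\times 2)\}$, where $\mathcal R_{I}(2\times 2)$ is the set of $2\times 2$ complex matrices of operator norm $<1$. *)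

From HB Require Import structures.
From mathcomp Require Import all_boot all_order all_algebra.
From mathcomp Require Import all_classical all_reals all_analysis.
From mathcomp Require Import complex.
Import numFieldNormedType.Exports.
Import Order.TTheory GRing.Theory Num.Theory.

Set Implicit Arguments.
Unset Strict Implicit.
Unset Printing Implicit Defensive.

Local Open Scope ring_scope.
Local Open Scope classical_set_scope.

(* Complex numbers are R[i] for R : realType; C^n is the row space 'rV[R[i]]_n,
   which mathcomp-analysis equips with a normed-module structure over R[i].
   Hence [differentiable f z] below is complex (Frechet) differentiability,
   i.e. holomorphy. Coordinates are 0-based in Rocq: w_k of the paper is
   [w ord0 (inord (k-1))], abbreviated [cw w k] (1-based). *)

Section Domains.
Variable R : realType.
Local Notation C := R[i].

Definition cabs (z : C) : R := Num.sqrt (complex.Re z ^+ 2 + complex.Im z ^+ 2).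

Definition cw n (w : 'rV[C]_n.+1) (k : nat) : C := w ord0 (inord k.-1).

Definition mkpt n (s : seq C) : 'rV[C]_n := \row_(j < n) s`_j.

Definition sqnorm n (z : 'rV[C]_n) : R := \sum_(j < n) cabs (z ord0 j) ^+ 2.

Definition ball_n n : set 'rV[C]_n := [set z | sqnorm z < 1].

Definition LieBall n : set 'rV[C]_n :=
  [set z | @ball_n n z /\
     Num.sqrt (sqnorm z ^+ 2 - cabs (\sum_(j < n) z ord0 j ^+ 2) ^+ 2)
       < 1 - sqnorm z].

Definition Lambda n (z : 'rV[C]_n) : 'rV[C]_n :=
  \row_(j < n) (if val j == 0%N then z ord0 j ^+ 2 else z ord0 j).

Definition LL n : set 'rV[C]_n := Lambda (n:=n) @` @LieBall n.

Definition disc : set C := [set z | cabs z < 1].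

Definition G2 : set 'rV[C]_2 :=
  [set x | exists l1 l2, disc l1 /\ disc l2 /\ x = mkpt 2 [:: l1 + l2; l1 * l2]].

Definition vnorm2 (v : 'cV[C]_2) : R := Num.sqrt (\sum_(i < 2) cabs (v i ord0) ^+ 2).

Definition opnorm (A : 'M[C]_2) : R :=
  sup [set r | exists v : 'cV[C]_2, vnorm2 v = 1 /\ r = vnorm2 (A *m v)].

Definition RIII2 : set 'M[C]_2 := [set A | A^T = A /\ opnorm A < 1].
Definition RI22 : set 'M[C]_2 := [set A | opnorm A < 1].

Local Notation a00 A := (A ord0 ord0).
Local Notation a01 A := (A ord0 (inord 1)).
Local Notation a10 A := (A (inord 1) ord0).
Local Notation a11 A := (A (inord 1) (inord 1)).

Definition Tetrablock : set 'rV[C]_3 :=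
  [set x | exists A, RIII2 A /\
     x = mkpt 3 [:: a00 A; a11 A; a00 A * a11 A - a01 A ^+ 2]].

Definition Fdom : set 'rV[C]_4 :=
  [set x | exists A, RI22 A /\
     x = mkpt 4 [:: a00 A; a11 A; a00 A * a11 A - a01 A * a10 A; a01 A + a10 A]].

Definition cdifferentiable_at m n (f : 'rV[C]_m -> 'rV[C]_n) :=
  fun z => differentiable f z.
Definition holomorphic_on m n (D : set 'rV[C]_m) (f : 'rV[C]_m -> 'rV[C]_n) :=
  forall z, D z -> cdifferentiable_at f z.

Definition biholomorphism n (D1 D2 : set 'rV[C]_n) (f : 'rV[C]_n -> 'rV[C]_n) :=
  exists g : 'rV[C]_n -> 'rV[C]_n,
    [/\ forall z, D1 z -> D2 (f z) /\ g (f z) = z,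
        forall w, D2 w -> D1 (g w) /\ f (g w) = w,
        holomorphic_on D1 f & holomorphic_on D2 g].

End Domains.
Arguments LL {R} n _.
Arguments LieBall {R} n _.
Arguments ball_n {R} n _.
Arguments G2 {R} _.
Arguments Tetrablock {R} _.
Arguments Fdom {R} _.
Arguments disc {R} _.
Arguments RIII2 {R} _.
Arguments RI22 {R} _.

(* Each map is a polynomial automorphism of C^n with polynomial inverse, so it
   only has to carry the domains onto each other.  All three conditions are of
   one shape: for a 2x2 matrix A, ||A|| < 1 says that both eigenvalues of A^* A
   are below 1, i.e. F < 2 and 1 - F + |P|^2 > 0 with F = tr (A^* A) and
   P = det A; for the Lie ball the same holds with F = 2 |z|^2 and
   P = sum_j z_j^2, and for G_2 with F = |l1|^2 + |l2|^2 and P = l1 l2.  Each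
   map comes from a linear change of variables matching these invariants. *)

From HB Require Import structures.
From mathcomp Require Import all_boot all_order all_algebra.
From mathcomp Require Import all_classical all_reals all_analysis.
From mathcomp Require Import complex.
From mathcomp Require Import ring lra.
Import numFieldNormedType.Exports.
Import Order.TTheory GRing.Theory Num.Theory.

Set Implicit Arguments.
Unset Strict Implicit.

Local Open Scope ring_scope.
Local Open Scope classical_set_scope.

Section ComplexModulus.
Variable R : realType.
Local Notation C := R[i].
Implicit Types (x y z : C) (a b : R).

Definition normc2 z : R := complex.Re z ^+ 2 + complex.Im z ^+ 2.

Lemma ReD x y : complex.Re (x + y) = complex.Re x + complex.Re y.
Proof. by case: x; case: y. Qed.
Lemma ImD x y : complex.Im (x + y) = complex.Im x + complex.Im y.
Proof. by case: x; case: y. Qed.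
Lemma ReN x : complex.Re (- x) = - complex.Re x. Proof. by case: x. Qed.
Lemma ImN x : complex.Im (- x) = - complex.Im x. Proof. by case: x. Qed.
Lemma ReM x y :
  complex.Re (x * y) = complex.Re x * complex.Re y - complex.Im x * complex.Im y.
Proof. by case: x; case: y. Qed.
Lemma ImM x y :
  complex.Im (x * y) = complex.Re x * complex.Im y + complex.Im x * complex.Re y.
Proof. by case: x => ? ?; case: y. Qed.
Lemma ReJ x : complex.Re x^*%C = complex.Re x. Proof. by case: x. Qed.
Lemma ImJ x : complex.Im x^*%C = - complex.Im x. Proof. by case: x. Qed.
Lemma Re_nat k : complex.Re (k%:R : C) = k%:R.
Proof. by elim: k => // k IH; rewrite -addn1 !natrD ReD IH. Qed.
Lemma Im_nat k : complex.Im (k%:R : C) = 0.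
Proof. by elim: k => // k IH; rewrite -addn1 natrD ImD IH add0r. Qed.

Definition ReImE :=
  (ReD, ImD, ReN, ImN, ReM, ImM, ReJ, ImJ, Re_nat, Im_nat, expr2).

Lemma normc2_ge0 z : 0 <= normc2 z.
Proof. by rewrite addr_ge0 ?sqr_ge0. Qed.

Lemma normc2_eq0 z : normc2 z = 0 -> z = 0.
Proof.
case: z => a b; rewrite /normc2 /= => h.
have -> : a = 0 by nra.
by have -> : b = 0 by nra.
Qed.

Lemma normc2N z : normc2 (- z) = normc2 z.
Proof. by rewrite /normc2 !ReImE; ring. Qed.

Lemma normc2M x y : normc2 (x * y) = normc2 x * normc2 y.
Proof. by rewrite /normc2 !ReImE; ring. Qed.

Lemma normc2_real a z : normc2 (z * a%:C%C) = a ^+ 2 * normc2 z.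
Proof. by rewrite /normc2 !ReImE /=; ring. Qed.

Lemma cabs_sqr z : cabs z ^+ 2 = normc2 z.
Proof. by rewrite sqr_sqrtr // normc2_ge0. Qed.

Lemma ltr_sqrt_sqr a b : 0 < b -> (Num.sqrt a < b) <-> a < b ^+ 2.
Proof.
move=> b0; rewrite -[X in _ < X](@ger0_norm _ b) ?ltW // -sqrtr_sqr.
by rewrite ltr_sqrt ?exprn_gt0.
Qed.

Lemma ler_sqrt_of_sqr a b : a ^+ 2 <= b -> a <= Num.sqrt b.
Proof.
move=> le_ab; have [a_le0|a_gt0] := leP a 0; first exact: le_trans (sqrtr_ge0 _).
by rewrite -(ger0_norm (ltW a_gt0)) -sqrtr_sqr; exact: ler_wsqrtr.
Qed.

Lemma disc_normc2 z : disc z <-> normc2 z < 1.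
Proof.
by rewrite /disc /= -[X in X < _]/(Num.sqrt (normc2 z)) ltr_sqrt_sqr // expr1n.
Qed.

(* For [F] and [D] the trace and determinant of a positive semidefinite 2x2
   matrix, [contractive2 F D] says that both of its eigenvalues lie below 1. *)
Definition contractive2 (F D : R) : Prop := F < 2%:R /\ 0 < 1 - F + D.

Lemma contractive2_sum_mul a b : contractive2 (a + b) (a * b) <-> a < 1 /\ b < 1.
Proof.
split=> [[lt2 pos]|[a1 b1]]; last by split; nra.
have prod_gt0 : 0 < (1 - a) * (1 - b) by nra.
by split; apply: contraTT prod_gt0; rewrite -!leNgt => ?; nra.
Qed.

Lemma disc2_contractive x y :
  disc x /\ disc y <-> contractive2 (normc2 x + normc2 y) (normc2 (x * y)).
Proof. by rewrite normc2M contractive2_sum_mul !disc_normc2. Qed.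

Definition hform (p r : R) (h x y : C) : R :=
  p * normc2 x + r * normc2 y + 2%:R * complex.Re (x^*%C * h * y).

Lemma hform_psd p r h : (forall x y, 0 <= hform p r h x y) ->
  [/\ 0 <= p, 0 <= r & normc2 h <= p * r].
Proof.
move=> psd.
have p_ge0 : 0 <= p.
  by have := psd 1 0; rewrite /hform /normc2 !ReImE /=; nra.
have r_ge0 : 0 <= r.
  by have := psd 0 1; rewrite /hform /normc2 !ReImE /=; nra.
split=> //; rewrite -subr_ge0.
have [p_gt0|p_le0] := ltP 0 p.
  have := psd (- h) p%:C%C.
  have -> : hform p r h (- h) p%:C%C = p * (p * r - normc2 h).
    by rewrite /hform /normc2 !ReImE /=; ring.
  by rewrite pmulr_rge0.
have [r_gt0|r_le0] := ltP 0 r.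
  have := psd r%:C%C (- h^*%C).
  have -> : hform p r h r%:C%C (- h^*%C) = r * (p * r - normc2 h).
    by rewrite /hform /normc2 !ReImE /=; ring.
  by rewrite pmulr_rge0.
have := psd 1 (- h^*%C).
have -> : hform p r h 1 (- h^*%C) = p + (r - 2%:R) * normc2 h.
  by rewrite /hform /normc2 !ReImE /=; ring.
have := normc2_ge0 h; nra.
Qed.

End ComplexModulus.

Section Matrices2.
Variable R : realType.
Local Notation C := R[i].
Implicit Types (a b c d x y : C).

Definition mx2 a b c d : 'M[C]_2 :=
  \matrix_(i, j) if val i == 0%N then (if val j == 0%N then a else b)
                 else (if val j == 0%N then c else d).

Definition col2 x y : 'cV[C]_2 := \col_i (if val i == 0%N then x else y).

Lemma sum_ord2 (V : nmodType) (F : 'I_2 -> V) :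
  \sum_(i < 2) F i = F ord0 + F (inord 1).
Proof.
rewrite big_ord_recr big_ord1.
by congr (F _ + F _); apply: val_inj; rewrite /= ?inordK.
Qed.

Lemma mx2_entries (A : 'M[C]_2) :
  A = mx2 (A ord0 ord0) (A ord0 (inord 1)) (A (inord 1) ord0) (A (inord 1) (inord 1)).
Proof.
apply/matrixP => -[[|[|//]] ?] [[|[|//]] ?]; rewrite mxE /=.
all: by congr (A _ _); apply: val_inj; rewrite /= ?inordK.
Qed.

Lemma mx2E00 a b c d : mx2 a b c d ord0 ord0 = a. Proof. by rewrite mxE. Qed.
Lemma mx2E01 a b c d : mx2 a b c d ord0 (inord 1) = b.
Proof. by rewrite mxE /= inordK. Qed.
Lemma mx2E10 a b c d : mx2 a b c d (inord 1) ord0 = c.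
Proof. by rewrite mxE /= inordK. Qed.
Lemma mx2E11 a b c d : mx2 a b c d (inord 1) (inord 1) = d.
Proof. by rewrite mxE /= inordK. Qed.
Definition mx2E := (mx2E00, mx2E01, mx2E10, mx2E11).

Lemma mx2_tr a b d : (mx2 a b b d)^T = mx2 a b b d.
Proof. by apply/matrixP => -[[|[|//]] ?] [[|[|//]] ?]; rewrite !mxE. Qed.

Lemma col2_entries (v : 'cV[C]_2) : v = col2 (v ord0 ord0) (v (inord 1) ord0).
Proof.
apply/matrixP => -[[|[|//]] ?] j; rewrite !mxE (ord1 j) /=.
all: by congr (v _ _); apply: val_inj; rewrite /= ?inordK.
Qed.

Lemma mulmx_col2 a b c d x y :
  mx2 a b c d *m col2 x y = col2 (a * x + b * y) (c * x + d * y).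
Proof.
by apply/matrixP => -[[|[|//]] ?] j; rewrite !mxE sum_ord2 !mxE /= inordK.
Qed.

Lemma vnorm2_col2 x y : vnorm2 (col2 x y) = Num.sqrt (normc2 x + normc2 y).
Proof. by rewrite /vnorm2 sum_ord2 !cabs_sqr !mxE /= inordK. Qed.

Lemma vnorm2_col2_eq1 x y : vnorm2 (col2 x y) = 1 -> normc2 x + normc2 y = 1.
Proof.
have N_ge0 := addr_ge0 (normc2_ge0 x) (normc2_ge0 y).
by rewrite vnorm2_col2 => N1; rewrite -(sqr_sqrtr N_ge0) N1 expr1n.
Qed.

Lemma vnorm2_e1 : vnorm2 (col2 1 0) = 1.
Proof. by rewrite vnorm2_col2 /normc2 /= expr1n expr0n /= !addr0 sqrtr1. Qed.

End Matrices2.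

Section OperatorNorm2.
Variable R : realType.
Local Notation C := R[i].
Variables a b c d : C.
Implicit Types (x y : C).

Local Notation A := (mx2 a b c d).
Local Notation F := (normc2 a + normc2 b + normc2 c + normc2 d).
Local Notation D := (normc2 (a * d - b * c)).
Local Notation lambda := ((F + Num.sqrt (F ^+ 2 - 4%:R * D)) / 2%:R).

Definition mxform x y : R := normc2 (a * x + b * y) + normc2 (c * x + d * y).

Lemma vnorm2_mulmx_col2 x y : vnorm2 (A *m col2 x y) = Num.sqrt (mxform x y).
Proof. by rewrite mulmx_col2 vnorm2_col2. Qed.

(* With B := A^* A and v := (x, y), Cayley-Hamilton gives
   |B v|^2 = F <B v, v> - D |v|^2, and Lagrange's identity gives
   |v|^2 |B v|^2 - <B v, v>^2 = |det (v, B v)|^2. *)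
Lemma mxform_cayley_hamilton x y :
  let N := normc2 x + normc2 y in
  let u := a * x + b * y in let u' := c * x + d * y in
  mxform x y ^+ 2 - F * mxform x y * N + D * N ^+ 2 =
  - normc2 (u^*%C * (b * x^*%C - a * y^*%C) + u'^*%C * (d * x^*%C - c * y^*%C)).
Proof. by rewrite /mxform /normc2 !ReImE; ring. Qed.

Lemma mxform_le_lambda x y : normc2 x + normc2 y = 1 -> mxform x y <= lambda.
Proof.
move=> N1; have := mxform_cayley_hamilton x y; rewrite /= N1 expr1n !mulr1.
set q := mxform x y => char_q.
have char_le0 : q ^+ 2 - F * q + D <= 0 by rewrite char_q oppr_le0 normc2_ge0.
have : 2%:R * q - F <= Num.sqrt (F ^+ 2 - 4%:R * D) by apply: ler_sqrt_of_sqr; nra.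
lra.
Qed.

Lemma mxform_scale x y (k : R) :
  mxform (x * k%:C%C) (y * k%:C%C) = k ^+ 2 * mxform x y.
Proof. by rewrite /mxform /normc2 !ReImE /=; ring. Qed.

Lemma vnorm2_mulmx_le_lambda (v : 'cV[C]_2) :
  vnorm2 v = 1 -> vnorm2 (A *m v) <= Num.sqrt lambda.
Proof.
rewrite (col2_entries v) vnorm2_mulmx_col2 => /vnorm2_col2_eq1 v1.
by rewrite ler_wsqrtr // mxform_le_lambda.
Qed.

Lemma opnorm_has_sup :
  has_sup [set r | exists v : 'cV[C]_2, vnorm2 v = 1 /\ r = vnorm2 (A *m v)].
Proof.
split; first by exists (vnorm2 (A *m col2 1 0)), (col2 1 0); rewrite vnorm2_e1.
by exists (Num.sqrt lambda) => _ [v [v1 ->]]; exact: vnorm2_mulmx_le_lambda.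
Qed.

Lemma opnorm_le_lambda : opnorm A <= Num.sqrt lambda.
Proof.
apply: ge_sup; first exact: opnorm_has_sup.1.
by move=> _ [v [v1 ->]]; exact: vnorm2_mulmx_le_lambda.
Qed.

Lemma mxform_unit_le_opnorm x y :
  normc2 x + normc2 y = 1 -> Num.sqrt (mxform x y) <= opnorm A.
Proof.
move=> N1; rewrite -vnorm2_mulmx_col2; apply: (sup_upper_bound opnorm_has_sup).
by exists (col2 x y); rewrite vnorm2_col2 N1 sqrtr1.
Qed.

Lemma opnorm_ge0 : 0 <= opnorm A.
Proof.
apply: le_trans (mxform_unit_le_opnorm (x := 1) (y := 0) _); first exact: sqrtr_ge0.
by rewrite /normc2 /= expr1n expr0n /= !addr0.
Qed.

Lemma mxform_le_opnorm x y : mxform x y <= opnorm A ^+ 2 * (normc2 x + normc2 y).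
Proof.
have [N0|N_neq0] := eqVneq (normc2 x + normc2 y) 0.
  have := normc2_ge0 x; have := normc2_ge0 y => y_ge0 x_ge0.
  have x0 : x = 0 by apply: normc2_eq0; lra.
  have y0 : y = 0 by apply: normc2_eq0; lra.
  by rewrite N0 mulr0 /mxform x0 y0 !mulr0 addr0 /normc2 /= expr0n /= !addr0.
set N := normc2 x + normc2 y in N_neq0 *.
have N_gt0 : 0 < N by rewrite lt_def N_neq0 addr_ge0 ?normc2_ge0.
set k := (Num.sqrt N)^-1.
have kN : k ^+ 2 * N = 1 by rewrite exprVn sqr_sqrtr ?ltW // mulVf.
have := mxform_unit_le_opnorm (x := x * k%:C%C) (y := y * k%:C%C).
rewrite !normc2_real -mulrDr kN mxform_scale => /(_ erefl) le_opnorm.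
have : k ^+ 2 * mxform x y <= opnorm A ^+ 2.
  have form_ge0 : 0 <= k ^+ 2 * mxform x y.
    by rewrite mulr_ge0 ?sqr_ge0 // addr_ge0 ?normc2_ge0.
  by rewrite -(sqr_sqrtr form_ge0) lerXn2r ?nnegrE ?sqrtr_ge0 ?opnorm_ge0.
by move/(ler_wpM2r (ltW N_gt0)); rewrite mulrAC kN mul1r.
Qed.

Lemma opnorm_lt1_of_contractive : contractive2 F D -> opnorm A < 1.
Proof.
case=> F_lt2 det_pos; apply: le_lt_trans opnorm_le_lambda _.
have : Num.sqrt (F ^+ 2 - 4%:R * D) < 2%:R - F by apply/ltr_sqrt_sqr; [lra | nra].
by move=> lt_root; apply/ltr_sqrt_sqr => //; rewrite expr1n; lra.
Qed.

(* For t := ||A||^2 the hermitian form t |v|^2 - |A v|^2 is positive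
   semidefinite; its matrix is t - A^* A, with diagonal entries [p], [r] and
   off-diagonal entry [h] below. *)
Lemma contractive_of_opnorm_lt1 : opnorm A < 1 -> contractive2 F D.
Proof.
move=> opnorm_lt1; have opnorm0 := opnorm_ge0.
set t := opnorm A ^+ 2.
have t_ge0 : 0 <= t by rewrite sqr_ge0.
have t_lt1 : t < 1 by rewrite /t; nra.
set p := t - (normc2 a + normc2 c); set r := t - (normc2 b + normc2 d).
set h := - (a^*%C * b + c^*%C * d).
have psd x y : 0 <= hform p r h x y.
  have -> : hform p r h x y = t * (normc2 x + normc2 y) - mxform x y.
    by rewrite /hform /mxform /p /r /h /normc2 !ReImE; ring.
  by rewrite subr_ge0; exact: mxform_le_opnorm.
have [p_ge0 r_ge0 h_le] := hform_psd psd.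
have F_eq : F = 2%:R * t - p - r by rewrite /p /r; ring.
have det_eq : 1 - F + D = (p * r - normc2 h) + (1 - t) * (1 - t + p + r).
  by rewrite F_eq /p /r /h /normc2 !ReImE; ring.
by split; rewrite ?det_eq; nra.
Qed.

Lemma opnorm_mx2_lt1 : opnorm A < 1 <-> contractive2 F D.
Proof.
by split; [exact: contractive_of_opnorm_lt1 | exact: opnorm_lt1_of_contractive].
Qed.

End OperatorNorm2.

Section LieBallCoordinates.
Variable R : realType.
Local Notation C := R[i].
Implicit Types (s : seq C) (x : C).

Lemma mkptP n (z : 'rV[C]_n) : exists2 s, size s = n & z = mkpt n s.
Proof.
exists [seq z ord0 j | j <- enum 'I_n]; first by rewrite size_map size_enum_ord.
by apply/rowP => j; rewrite mxE (nth_map j) ?size_enum_ord // nth_ord_enum.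
Qed.

Lemma cw_mkpt n s k : (0 < k <= n.+1)%N -> cw (mkpt n.+1 s) k = s`_k.-1.
Proof. by case/andP=> k_gt0 k_le; rewrite /cw mxE inordK // prednK. Qed.

Lemma eq_cw n (w w' : 'rV[C]_n.+1) :
  (forall k, (0 < k <= n.+1)%N -> cw w k = cw w' k) -> w = w'.
Proof.
by move=> eq_w; apply/rowP => j; have := eq_w j.+1 (ltn_ord j); rewrite /cw inord_val.
Qed.

Lemma Lambda_mkpt n x s : Lambda (mkpt n.+1 (x :: s)) = mkpt n.+1 (x ^+ 2 :: s).
Proof. by apply/rowP => -[[|j] ?]; rewrite !mxE. Qed.

Lemma sum_mkpt (V : nmodType) (F : C -> V) n s : size s = n ->
  \sum_(j < n) F (mkpt n s ord0 j) = \sum_(x <- s) F x.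
Proof.
move=> <-; rewrite (big_nth 0) big_mkord.
by apply: eq_bigr => j _; rewrite mxE.
Qed.

Lemma LieBall_contractive n (z : 'rV[C]_n) : LieBall n z <->
  contractive2 (2%:R * sqnorm z) (normc2 (\sum_(j < n) z ord0 j ^+ 2)).
Proof.
rewrite /LieBall /ball_n /= cabs_sqr /contractive2.
have := normc2_ge0 (\sum_(j < n) z ord0 j ^+ 2).
split=> [[N_lt1 /ltr_sqrt_sqr]|[N_lt1 P_gt]].
  by rewrite subr_gt0 => /(_ N_lt1); nra.
by split; [lra | apply/ltr_sqrt_sqr; [lra | nra]].
Qed.

Lemma LieBall_mkpt n s : size s = n -> LieBall n (mkpt n s) <->
  contractive2 (2%:R * \sum_(x <- s) normc2 x) (normc2 (\sum_(x <- s) x ^+ 2)).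
Proof.
move=> size_s; rewrite LieBall_contractive /sqnorm (sum_mkpt (fun x => x ^+ 2)) //.
by rewrite (sum_mkpt (fun x => cabs x ^+ 2)) //; under eq_bigr do rewrite cabs_sqr.
Qed.

End LieBallCoordinates.

Lemma differentiable_row (K : numFieldType) n m (s : 'rV[K]_n -> seq K) x :
  (forall j, (j < m)%N -> differentiable (fun w => (s w)`_j) x) ->
  differentiable (fun w => \row_(j < m) (s w)`_j) x.
Proof.
move=> ds; have -> : (fun w => \row_(j < m) (s w)`_j) =
    \sum_(j < m) (fun w => (s w)`_j *: delta_mx ord0 j).
  apply/funext => w; rewrite fct_sumE [LHS]row_sum_delta.
  by apply: eq_bigr => j _; rewrite mxE.
by apply: differentiable_sum => j; apply: differentiableZl; exact: ds.
Qed.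

Ltac differentiable_poly :=
  repeat first [ apply: differentiableD | apply: differentiableB
               | apply: differentiableN | apply: differentiableM
               | apply: differentiableX | apply: differentiable_coord
               | apply: differentiable_cst ].

Section Biholomorphisms.
Variable R : realType.
Local Notation C := R[i].

Lemma biholomorphism_of_inverse n (D1 D2 : set 'rV[C]_n)
    (f g : 'rV[C]_n -> 'rV[C]_n) :
  cancel f g -> cancel g f ->
  (forall z, D1 z -> D2 (f z)) -> (forall w, D2 w -> D1 (g w)) ->
  (forall z, differentiable f z) -> (forall w, differentiable g w) ->
  biholomorphism D1 D2 f.
Proof. by move=> fK gK fD gD df dg; exists g; split=> [z /fD|w /gD|z _|w _]. Qed.

Definition LL2_to_G2 (w : 'rV[C]_2) : 'rV[C]_2 :=
  mkpt 2 [:: 2%:R * 'i%C * cw w 2; - cw w 1 - cw w 2 ^+ 2].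
Definition G2_to_LL2 (x : 'rV[C]_2) : 'rV[C]_2 :=
  mkpt 2 [:: cw x 1 ^+ 2 / 4%:R - cw x 2; - 'i%C * cw x 1 / 2%:R].

Lemma LL2_to_G2K : cancel LL2_to_G2 G2_to_LL2.
Proof.
move=> w; apply: eq_cw => -[|[|[|//]]] // _.
all: by rewrite !cw_mkpt //=; field: (sqr_i R).
Qed.

Lemma G2_to_LL2K : cancel G2_to_LL2 LL2_to_G2.
Proof.
move=> x; apply: eq_cw => -[|[|[|//]]] // _.
all: by rewrite !cw_mkpt //=; field: (sqr_i R).
Qed.

Lemma LieBall2_disc (z1 z2 : C) : LieBall 2 (mkpt 2 [:: z1; z2]) <->
  disc (z1 + 'i%C * z2) /\ disc (- z1 + 'i%C * z2).
Proof.
rewrite LieBall_mkpt // disc2_contractive !big_cons !big_nil !addr0.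
have -> : (z1 + 'i%C * z2) * (- z1 + 'i%C * z2) = - (z1 ^+ 2 + z2 ^+ 2).
  by ring: (sqr_i R).
have -> : normc2 (z1 + 'i%C * z2) + normc2 (- z1 + 'i%C * z2) =
          2%:R * (normc2 z1 + normc2 z2).
  by rewrite /normc2 !ReImE /=; ring.
by rewrite normc2N.
Qed.

Lemma LL2_to_G2_in z : LL 2 z -> G2 (LL2_to_G2 z).
Proof.
case=> y + <-; have [[|z1 [|z2 []]] // _ ->] := mkptP y.
move=> /LieBall2_disc[d1 d2]; exists (z1 + 'i%C * z2), (- z1 + 'i%C * z2).
do 2 split => //; rewrite Lambda_mkpt /LL2_to_G2 !cw_mkpt //=.
by congr (mkpt 2 [:: _; _]); ring: (sqr_i R).
Qed.

Lemma G2_to_LL2_in x : G2 x -> LL 2 (G2_to_LL2 x).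
Proof.
case=> l1 [l2 [d1 [d2 ->]]].
exists (mkpt 2 [:: (l1 - l2) / 2%:R; - 'i%C * (l1 + l2) / 2%:R]).
  apply/LieBall2_disc; split.
    by have -> : (l1 - l2) / 2%:R + 'i%C * (- 'i%C * (l1 + l2) / 2%:R) = l1
      by field: (sqr_i R).
  by have -> : - ((l1 - l2) / 2%:R) + 'i%C * (- 'i%C * (l1 + l2) / 2%:R) = l2
    by field: (sqr_i R).
rewrite Lambda_mkpt /G2_to_LL2 !cw_mkpt //=.
by congr (mkpt 2 [:: _; _]); field: (sqr_i R).
Qed.

Lemma biholomorphism_LL2_G2 : biholomorphism (LL 2) G2 LL2_to_G2.
Proof.
apply: (biholomorphism_of_inverse LL2_to_G2K G2_to_LL2K LL2_to_G2_in G2_to_LL2_in).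
  by move=> w; apply: differentiable_row => -[|[|//]] _ /=; differentiable_poly.
by move=> x; apply: differentiable_row => -[|[|//]] _ /=; differentiable_poly.
Qed.

Definition LL3_to_E (w : 'rV[C]_3) : 'rV[C]_3 :=
  mkpt 3 [:: cw w 2 + 'i%C * cw w 3; - cw w 2 + 'i%C * cw w 3;
             - cw w 3 ^+ 2 - cw w 2 ^+ 2 - cw w 1].
Definition E_to_LL3 (x : 'rV[C]_3) : 'rV[C]_3 :=
  mkpt 3 [:: cw x 1 * cw x 2 - cw x 3; (cw x 1 - cw x 2) / 2%:R;
             - 'i%C * (cw x 1 + cw x 2) / 2%:R].

Lemma LL3_to_EK : cancel LL3_to_E E_to_LL3.
Proof.
move=> w; apply: eq_cw => -[|[|[|[|//]]]] // _.
all: by rewrite !cw_mkpt //=; field: (sqr_i R).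
Qed.

Lemma E_to_LL3K : cancel E_to_LL3 LL3_to_E.
Proof.
move=> x; apply: eq_cw => -[|[|[|[|//]]]] // _.
all: by rewrite !cw_mkpt //=; field: (sqr_i R).
Qed.

Lemma LieBall3_opnorm (z1 z2 z3 : C) : LieBall 3 (mkpt 3 [:: z1; z2; z3]) <->
  opnorm (mx2 (z2 + 'i%C * z3) z1 z1 (- z2 + 'i%C * z3)) < 1.
Proof.
rewrite LieBall_mkpt // opnorm_mx2_lt1 !big_cons !big_nil !addr0.
have -> : (z2 + 'i%C * z3) * (- z2 + 'i%C * z3) - z1 * z1 =
          - (z1 ^+ 2 + (z2 ^+ 2 + z3 ^+ 2)) by ring: (sqr_i R).
have -> : normc2 (z2 + 'i%C * z3) + normc2 z1 + normc2 z1 + normc2 (- z2 + 'i%C * z3)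
          = 2%:R * (normc2 z1 + (normc2 z2 + normc2 z3)).
  by rewrite /normc2 !ReImE /=; ring.
by rewrite normc2N.
Qed.

Lemma LL3_to_E_in z : LL 3 z -> Tetrablock (LL3_to_E z).
Proof.
case=> y + <-; have [[|z1 [|z2 [|z3 []]]] // _ ->] := mkptP y.
move=> /LieBall3_opnorm A_lt1.
exists (mx2 (z2 + 'i%C * z3) z1 z1 (- z2 + 'i%C * z3)).
split; first by split; rewrite ?mx2_tr.
rewrite Lambda_mkpt /LL3_to_E !cw_mkpt //= !mx2E.
by congr (mkpt 3 [:: _; _; _]); ring: (sqr_i R).
Qed.

Lemma E_to_LL3_in x : Tetrablock x -> LL 3 (E_to_LL3 x).
Proof.
case=> A [[A_sym A_lt1] ->].
have A10 : A (inord 1) ord0 = A ord0 (inord 1) by rewrite -[in LHS]A_sym mxE.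
move: A_lt1; rewrite (mx2_entries A) A10.
set a := A ord0 ord0; set b := A ord0 (inord 1); set d := A (inord 1) (inord 1).
move=> A_lt1; exists (mkpt 3 [:: b; (a - d) / 2%:R; - 'i%C * (a + d) / 2%:R]).
  apply/LieBall3_opnorm; congr (opnorm _ < 1): A_lt1.
  by congr mx2; field: (sqr_i R).
rewrite Lambda_mkpt /E_to_LL3 !cw_mkpt //= !mx2E.
by congr (mkpt 3 [:: _; _; _]); field: (sqr_i R).
Qed.

Lemma biholomorphism_LL3_E : biholomorphism (LL 3) Tetrablock LL3_to_E.
Proof.
apply: (biholomorphism_of_inverse LL3_to_EK E_to_LL3K LL3_to_E_in E_to_LL3_in).
  by move=> w; apply: differentiable_row => -[|[|[|//]]] _ /=; differentiable_poly.
by move=> x; apply: differentiable_row => -[|[|[|//]]] _ /=; differentiable_poly.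
Qed.

Definition LL4_to_F (w : 'rV[C]_4) : 'rV[C]_4 :=
  mkpt 4 [:: cw w 3 + 'i%C * cw w 4; - cw w 3 + 'i%C * cw w 4;
             - cw w 2 ^+ 2 - cw w 3 ^+ 2 - cw w 4 ^+ 2 - cw w 1; 2%:R * cw w 2].
Definition F_to_LL4 (x : 'rV[C]_4) : 'rV[C]_4 :=
  mkpt 4 [:: cw x 1 * cw x 2 - cw x 4 ^+ 2 / 4%:R - cw x 3; cw x 4 / 2%:R;
             (cw x 1 - cw x 2) / 2%:R; - 'i%C * (cw x 1 + cw x 2) / 2%:R].

Lemma LL4_to_FK : cancel LL4_to_F F_to_LL4.
Proof.
move=> w; apply: eq_cw => -[|[|[|[|[|//]]]]] // _.
all: by rewrite !cw_mkpt //=; field: (sqr_i R).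
Qed.

Lemma F_to_LL4K : cancel F_to_LL4 LL4_to_F.
Proof.
move=> x; apply: eq_cw => -[|[|[|[|[|//]]]]] // _.
all: by rewrite !cw_mkpt //=; field: (sqr_i R).
Qed.

Lemma LieBall4_opnorm (z1 z2 z3 z4 : C) :
  LieBall 4 (mkpt 4 [:: z1; z2; z3; z4]) <->
  opnorm (mx2 (z3 + 'i%C * z4) (z2 + 'i%C * z1)
              (z2 - 'i%C * z1) (- z3 + 'i%C * z4)) < 1.
Proof.
rewrite LieBall_mkpt // opnorm_mx2_lt1 !big_cons !big_nil !addr0.
have -> : (z3 + 'i%C * z4) * (- z3 + 'i%C * z4)
          - (z2 + 'i%C * z1) * (z2 - 'i%C * z1) =
          - (z1 ^+ 2 + (z2 ^+ 2 + (z3 ^+ 2 + z4 ^+ 2))) by ring: (sqr_i R).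
have -> : normc2 (z3 + 'i%C * z4) + normc2 (z2 + 'i%C * z1)
          + normc2 (z2 - 'i%C * z1) + normc2 (- z3 + 'i%C * z4)
          = 2%:R * (normc2 z1 + (normc2 z2 + (normc2 z3 + normc2 z4))).
  by rewrite /normc2 !ReImE /=; ring.
by rewrite normc2N.
Qed.

Lemma LL4_to_F_in z : LL 4 z -> Fdom (LL4_to_F z).
Proof.
case=> y + <-; have [[|z1 [|z2 [|z3 [|z4 []]]]] // _ ->] := mkptP y.
move=> /LieBall4_opnorm A_lt1.
exists (mx2 (z3 + 'i%C * z4) (z2 + 'i%C * z1) (z2 - 'i%C * z1) (- z3 + 'i%C * z4)).
split=> //; rewrite Lambda_mkpt /LL4_to_F !cw_mkpt //= !mx2E.
by congr (mkpt 4 [:: _; _; _; _]); ring: (sqr_i R).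
Qed.

Lemma F_to_LL4_in x : Fdom x -> LL 4 (F_to_LL4 x).
Proof.
case=> A [A_lt1 ->]; move: A_lt1; rewrite (mx2_entries A).
set a := A ord0 ord0; set b := A ord0 (inord 1).
set c := A (inord 1) ord0; set d := A (inord 1) (inord 1).
move=> A_lt1; exists (mkpt 4 [:: - 'i%C * (b - c) / 2%:R; (b + c) / 2%:R;
                               (a - d) / 2%:R; - 'i%C * (a + d) / 2%:R]).
  apply/LieBall4_opnorm; congr (opnorm _ < 1): A_lt1.
  by congr mx2; field: (sqr_i R).
rewrite Lambda_mkpt /F_to_LL4 !cw_mkpt //= !mx2E.
by congr (mkpt 4 [:: _; _; _; _]); field: (sqr_i R).
Qed.

Lemma biholomorphism_LL4_F : biholomorphism (LL 4) Fdom LL4_to_F.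
Proof.
apply: (biholomorphism_of_inverse LL4_to_FK F_to_LL4K LL4_to_F_in F_to_LL4_in).
  by move=> w; apply: differentiable_row => -[|[|[|[|//]]]] _ /=; differentiable_poly.
by move=> x; apply: differentiable_row => -[|[|[|[|//]]]] _ /=; differentiable_poly.
Qed.

End Biholomorphisms.

Theorem corollary3p9 (R : realType) :
  [/\ biholomorphism (LL 2) G2
        (fun w : 'rV[R[i]]_2 =>
           mkpt 2 [:: 2%:R * 'i%C * cw w 2; - cw w 1 - cw w 2 ^+ 2]),
      biholomorphism (LL 3) Tetrablock
        (fun w : 'rV[R[i]]_3 =>
           mkpt 3 [:: cw w 2 + 'i%C * cw w 3; - cw w 2 + 'i%C * cw w 3;
                      - cw w 3 ^+ 2 - cw w 2 ^+ 2 - cw w 1])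
    & biholomorphism (LL 4) Fdom
        (fun w : 'rV[R[i]]_4 =>
           mkpt 4 [:: cw w 3 + 'i%C * cw w 4; - cw w 3 + 'i%C * cw w 4;
                      - cw w 2 ^+ 2 - cw w 3 ^+ 2 - cw w 4 ^+ 2 - cw w 1;
                      2%:R * cw w 2])].
Proof.
split; [exact: biholomorphism_LL2_G2 | exact: biholomorphism_LL3_E
       | exact: biholomorphism_LL4_F].
Qed.
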